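(* For all integers $l\ge1$ and $n\ge1$, the colored Eulerian polynomial $A_n^{(l)}(t)=\sum_{\pi\in C_l\wr\mathfrak{S}_n}t^{\mathrm{fexc}(\pi)}$ is $t$-symmetric and log-concave; in particular it is $t$-unimodal.
   Context: $C_l\wr\mathfrak{S}_n$ is the set of words $\pi=\pi_1\cdots\pi_n$ with $\pi_i=|\pi_i|^{\epsilon_i}$, $\epsilon_i\in\{0,\dots,l-1\}$, and $|\pi_1|\cdots|\pi_n|\in\mathfrak{S}_n$. $\mathrm{exc}(\pi)$ is the number of $i$ with $\epsilon_i=0$ and $|\pi_i|>i$, and $\mathrm{fexc}(\pi)=l\cdot\mathrm{exc}(\pi)+\sum_{i=1}^n\epsilon_i$. A nonzero polynomial $\sum_{i=r}^sa_it^i$ with $a_r,a_s\ne0$ is $t$-symmetric if $a_{r+k}=a_{s-k}$ for all $0\le k\le s-r$; it is log-concave if $a_k^2\ge a_{k-1}a_{k+1}$ for $r<k<s$; it is $t$-unimodal if $a_r\le a_{r+1}\le\dots\le a_{\lfloor(r+s)/2\rfloor}$ and $a_{\lfloor(r+s+1)/2\rfloor}\ge\dots\ge a_s$. *)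

From mathcomp Require Import all_boot all_order all_algebra all_fingroup.
Set Implicit Arguments. Unset Strict Implicit. Unset Printing Implicit Defensive.
Import Order.TTheory GRing.Theory Num.Theory.
Local Open Scope ring_scope.

(* A colored permutation in C_l wr S_n is a pair (s, eps): the underlying
   permutation s : 'S_n (|pi_i| = s i, positions 0-based) and the colors
   eps : 'I_n -> 'I_l (epsilon_i). *)
Definition colperm (l n : nat) := ('S_n * {ffun 'I_n -> 'I_l})%type.

Definition cexc (l n : nat) (pi : colperm l n) : nat :=
  #|[pred i : 'I_n | (nat_of_ord (pi.2 i) == 0%N) && (i < pi.1 i)%N]|.

Definition fexc (l n : nat) (pi : colperm l n) : nat :=
  (l * cexc pi + \sum_(i < n) nat_of_ord (pi.2 i))%N.

Definition colEulerian (l n : nat) : {poly int} :=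
  \sum_(pi : colperm l n) 'X^(fexc pi).

Definition lowdeg (R : nzRingType) (p : {poly R}) : nat :=
  find (fun c => c != 0) (polyseq p).

Definition t_symmetric (R : nzRingType) (p : {poly R}) : Prop :=
  let r := lowdeg p in let s := (size p).-1 in
  p != 0 /\ forall k : nat, (k <= s - r)%N -> p`_(r + k) = p`_(s - k).

Definition log_concave (R : realDomainType) (p : {poly R}) : Prop :=
  let r := lowdeg p in let s := (size p).-1 in
  p != 0 /\ forall k : nat, (r < k)%N -> (k < s)%N ->
    p`_(k.-1) * p`_(k.+1) <= p`_k ^+ 2.

Definition t_unimodal (R : realDomainType) (p : {poly R}) : Prop :=
  let r := lowdeg p in let s := (size p).-1 in
  p != 0 /\
  (forall k : nat, (r <= k)%N -> (k < (r + s)./2)%N -> p`_k <= p`_k.+1) /\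
  (forall k : nat, ((r + s).+1./2 <= k)%N -> (k < s)%N -> p`_k.+1 <= p`_k).

From mathcomp Require Import all_boot all_order all_algebra all_fingroup.
From mathcomp Require Import zify ring.
Set Implicit Arguments. Unset Strict Implicit. Unset Printing Implicit Defensive.
Import Order.TTheory GRing.Theory Num.Theory.
Local Open Scope ring_scope.

(* The colors of the positions of a colored permutation can be chosen
   independently: summing [t^(l [color 0 and excedance] + color)] over the
   colors of one position gives [1 + t + ... + t^(l-1)], times [t] at an
   excedance of the underlying permutation. Hence
   [A_n^(l)(t) = (1 + ... + t^(l-1))^n A_n(t)] with [A_n] the Eulerian
   polynomial. Both factors have symmetric, log-concave coefficient sequences
   without internal zeros: for [A_n] this follows by induction from the
   recurrence [A(n+1,k) = (k+1) A(n,k) + (n+1-k) A(n,k-1)], obtained by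
   inserting the maximum. Such sequences are closed under convolution
   (symmetrize the double sum giving [h_(z+1)^2 - h_z h_(z+2)]), and a
   symmetric log-concave sequence without internal zeros is unimodal. *)

Definition lc_on (f : int -> int) (s : nat) : Prop :=
  [/\ forall z, 0 <= f z, forall z, (0 < f z) = (0 <= z <= s%:Z) &
      forall z, f z * f (z + 2) <= f (z + 1) ^+ 2].

Definition sym_on (f : int -> int) (s : nat) : Prop := forall z, f z = f (s%:Z - z).

Section LogConcaveSequence.
Variables (f : int -> int) (s : nat).
Hypothesis lcf : lc_on f s.

Lemma lc_on_eq0 z : (z < 0) || (s%:Z < z) -> f z = 0.
Proof.
case: lcf => ge0 gt0 _ out; apply/eqP; rewrite eq_le ge0 andbT leNgt gt0.
by apply/negP => /andP[]; case/orP: out; lia.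
Qed.

Lemma lc_on_gt0 z : 0 <= z -> z <= s%:Z -> 0 < f z.
Proof. by case: lcf => _ gt0 _ z_ge0 z_le; rewrite gt0 z_ge0 z_le. Qed.

Lemma lc_on_supp z : 0 < f z -> 0 <= z <= s%:Z.
Proof. by case: lcf => _ gt0 _; rewrite gt0. Qed.

(* Log-concavity without internal zeros makes the ratios [f (z + 1) / f z]
   nonincreasing: the two lemmas below are that monotonicity, cleared of
   denominators. *)
Lemma lc_on_ratio1 x y : x <= y -> f x * f (y + 1) <= f (x + 1) * f y.
Proof.
have [ge0 _ lc] := lcf.
move=> xy; have -> : y = x + (`|y - x|%N)%:Z by rewrite gez0_abs ?subr_ge0 //; ring.
elim: `|y - x|%N => [|m IH]; first by rewrite addr0 mulrC.
have -> : x + m.+1%:Z + 1 = (x + m%:Z) + 2 by lia.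
have -> : x + m.+1%:Z = (x + m%:Z) + 1 by lia.
have [fx0|/negbTE fx0] := eqVneq (f x) 0; first by rewrite fx0 mul0r mulr_ge0.
have [fy0|/negbTE fy0] := eqVneq (f (x + m%:Z + 2)) 0.
  by rewrite fy0 mulr0 mulr_ge0.
have /lc_on_supp/andP[x_ge0 _] : 0 < f x by rewrite lt_def fx0 ge0.
have /lc_on_supp/andP[_ y_le] : 0 < f (x + m%:Z + 2) by rewrite lt_def fy0 ge0.
have fm_gt0 : 0 < f (x + m%:Z + 1) by apply: lc_on_gt0; lia.
rewrite -(ler_pM2l fm_gt0).
apply: (le_trans (y := f (x + 1) * f (x + m%:Z) * f (x + m%:Z + 2))).
  by rewrite mulrCA mulrA ler_wpM2r.
by rewrite -mulrA [X in _ <= X]mulrCA -expr2 ler_wpM2l.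
Qed.

Lemma lc_on_ratio x y (d : nat) : x <= y -> f x * f (y + d%:Z) <= f (x + d%:Z) * f y.
Proof.
have [ge0 _ _] := lcf.
move=> xy; elim: d => [|d IH]; first by rewrite !addr0.
have -> : y + d.+1%:Z = (y + d%:Z) + 1 by lia.
have -> : x + d.+1%:Z = (x + d%:Z) + 1 by lia.
have [fx0|/negbTE fx0] := eqVneq (f x) 0; first by rewrite fx0 mul0r mulr_ge0.
have [fy0|/negbTE fy0] := eqVneq (f (y + d%:Z + 1)) 0.
  by rewrite fy0 mulr0 mulr_ge0.
have /lc_on_supp/andP[x_ge0 _] : 0 < f x by rewrite lt_def fx0 ge0.
have /lc_on_supp/andP[_ y_le] : 0 < f (y + d%:Z + 1) by rewrite lt_def fy0 ge0.
have fyd_gt0 : 0 < f (y + d%:Z) by apply: lc_on_gt0; lia.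
have step : f (x + d%:Z) * f (y + d%:Z + 1) <= f (x + d%:Z + 1) * f (y + d%:Z).
  by apply: lc_on_ratio1; lia.
have IH' := ler_wpM2r (ge0 (y + d%:Z + 1)) IH.
have step' := ler_wpM2l (ge0 y) step.
rewrite -(ler_pM2l fyd_gt0) mulrCA mulrA [X in _ <= X]mulrCA [f (y + _) * f y]mulrC.
apply: (le_trans IH'); rewrite [f (x + _) * f y]mulrC -mulrA.
by rewrite [X in _ <= X]mulrCA.
Qed.

End LogConcaveSequence.

Definition conv (f g : int -> int) (N : nat) (z : int) : int :=
  \sum_(j < N) f j%:Z * g (z - j%:Z).

Section Convolution.
Variables (f g : int -> int) (s t : nat).
Hypotheses (lcf : lc_on f s) (lcg : lc_on g t).

(* Summing one index beyond the support of [f] leaves room to shift the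
   index by one, see [conv_shift]. *)
Let h := conv f g s.+2.

Lemma conv_shift z :
  h z = \sum_(j < s.+2) f (j%:Z - 1) * g (z + 1 - j%:Z).
Proof.
rewrite /h /conv [RHS]big_ord_recl [LHS]big_ord_recr /=.
rewrite (lc_on_eq0 lcf (z := s.+1%:Z)) ?mul0r ?addr0; last by apply/orP; right; lia.
rewrite (lc_on_eq0 lcf (z := 0 - 1)) ?mul0r ?add0r; last by apply/orP; left; lia.
by apply: eq_bigr => i _; congr (f _ * g _); rewrite /bump /=; lia.
Qed.

Let minor_f (p q : int) := f p * f (q - 1) - f (p - 1) * f q.
Let prod_g z (p q : int) := g (z + 1 - p) * g (z + 2 - q).

Lemma minor_prod_ge0 z (p q : nat) :
  (p <= q)%N -> 0 <= minor_f p q * (prod_g z p q - prod_g z q p).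
Proof.
move=> pq; apply: mulr_ge0; rewrite subr_ge0.
  have := lc_on_ratio (x := p%:Z - 1) (y := q%:Z - 1) lcf 1.
  by rewrite !subrK; apply; lia.
have := lc_on_ratio (x := z + 1 - q%:Z) (y := z + 2 - q%:Z) lcg (q - p).
have -> : z + 2 - q%:Z + (q - p)%N%:Z = z + 2 - p%:Z by lia.
have -> : z + 1 - q%:Z + (q - p)%N%:Z = z + 1 - p%:Z by lia.
by apply; lia.
Qed.

(* [h (z + 1) ^+ 2 - h z * h (z + 2)] is a double sum of
   [minor_f p q * prod_g z p q]; symmetrizing in [p, q] turns it into a sum of
   the nonnegative terms of [minor_prod_ge0]. *)
Lemma conv_log_concave z : h z * h (z + 2) <= h (z + 1) ^+ 2.
Proof.
set D := h (z + 1) ^+ 2 - h z * h (z + 2).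
suff DD : 0 <= D + D by rewrite -subr_ge0; lia.
have ED : D = \sum_(p < s.+2) \sum_(q < s.+2) minor_f p q * prod_g z p q.
  rewrite /D expr2 {2}conv_shift [h z]conv_shift (_ : z + 1 + 1 = z + 2); last by ring.
  rewrite /h /conv !big_distrlr -sumrB; apply: eq_bigr => p _.
  by rewrite -sumrB; apply: eq_bigr => q _; rewrite /minor_f /prod_g /=; ring.
rewrite {1}ED {1}ED [X in _ + X]exchange_big -big_split /=.
apply: sumr_ge0 => p _; rewrite -big_split /=; apply: sumr_ge0 => q _.
have pair_sum (a b : int) : minor_f a b * prod_g z a b + minor_f b a * prod_g z b a =
    minor_f a b * (prod_g z a b - prod_g z b a) by rewrite /minor_f; ring.
have [pq|/ltnW qp] := leqP p q; first by rewrite pair_sum minor_prod_ge0.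
by rewrite addrC pair_sum minor_prod_ge0.
Qed.

Lemma lc_on_conv : lc_on h (s + t).
Proof.
have [ge0f _ _] := lcf; have [ge0g _ _] := lcg.
have ge0 z : 0 <= h z by apply: sumr_ge0 => j _; apply: mulr_ge0.
split => // [z|]; last exact: conv_log_concave.
have [/andP[z_ge0 z_le]|z_out] := boolP (0 <= z <= (s + t)%N%:Z); last first.
  rewrite /h /conv big1 ?ltxx; first by apply/esym/negbTE.
  move=> j _; have [js|js] := leqP j s.
    by rewrite (lc_on_eq0 lcg (z := z - j%:Z)) ?mulr0 //; lia.
  by rewrite (lc_on_eq0 lcf (z := j%:Z)) ?mul0r //; apply/orP; right; lia.
apply/esym/idP; have [k ?] : exists k : nat, z = k%:Z by exists `|z|%N; rewrite gez0_abs.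
subst z.
have j0_lt : (minn k s < s.+2)%N by lia.
rewrite /h /conv (bigD1 (Ordinal j0_lt)) //= ltr_wpDr //.
  by apply: sumr_ge0 => j _; apply: mulr_ge0.
by apply: mulr_gt0; [apply: (lc_on_gt0 lcf) | apply: (lc_on_gt0 lcg)]; lia.
Qed.

End Convolution.

Lemma sym_on_conv f g s t :
  sym_on f s -> sym_on g t -> sym_on (conv f g s.+1) (s + t).
Proof.
move=> sf sg z; rewrite /conv (reindex_inj rev_ord_inj) /=.
by apply: eq_bigr => j _; rewrite sf sg; congr (f _ * g _); have := ltn_ord j; lia.
Qed.

(* For [f] the coefficients of [A_(n+1)], supported on [0, n], this gives those
   of [A_(n+2)]. *)
Definition eulerian_step (f : int -> int) (n : nat) (z : int) : int :=
  (z + 1) * f z + (n.+2%:Z - z) * f (z - 1).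

Section EulerianStep.
Variables (f : int -> int) (n : nat).
Hypothesis lcf : lc_on f n.
Let F := eulerian_step f n.

Lemma eulerian_step_eq0 z : (z < 0) || (n.+1%:Z < z) -> F z = 0.
Proof.
move=> out; rewrite /F /eulerian_step (lc_on_eq0 lcf (z := z)).
  by rewrite (lc_on_eq0 lcf (z := z - 1)) ?mulr0 ?addr0 //; move: out; lia.
by move: out; lia.
Qed.

Lemma eulerian_step_ge0 z : 0 <= F z.
Proof.
have [ge0 _ _] := lcf.
have [out|/norP[]] := boolP ((z < 0) || (n.+1%:Z < z)); first by rewrite eulerian_step_eq0.
by rewrite -!leNgt => z_ge0 z_le; rewrite addr_ge0 // mulr_ge0 //; lia.
Qed.

(* The four summands are nonnegative for [-1 <= z <= n]: the first three by
   log-concavity of [f] (the third through [lc_on_ratio]), the last being a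
   square. *)
Lemma eulerian_step_log_concave z : F z * F (z + 2) <= F (z + 1) ^+ 2.
Proof.
have [ge0 _ lc] := lcf.
have [out|/norP[]] := boolP ((z + 1 < 0) || (n.+1%:Z < z + 1)).
  case/orP: out => out.
    by rewrite eulerian_step_eq0 ?mul0r ?sqr_ge0 //; apply/orP; left; lia.
  by rewrite (eulerian_step_eq0 (z := z + 2)) ?mulr0 ?sqr_ge0 //; apply/orP; right; lia.
rewrite -!leNgt => z_ge n_ge.
have lc0 : f (z - 1) * f (z + 1) <= f z ^+ 2.
  by have := lc (z - 1); rewrite (_ : z - 1 + 2 = z + 1) ?subrK //; ring.
have lc1 : f (z - 1) * f (z + 2) <= f z * f (z + 1).
  have := lc_on_ratio (x := z - 1) (y := z + 1) lcf 1; rewrite subrK.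
  by rewrite (_ : z + 1 + 1%:Z = z + 2) ?addrA //; apply; lia.
rewrite /F /eulerian_step (_ : z + 2 - 1 = z + 1); last by ring.
rewrite (_ : z + 1 - 1 = z); last by ring.
rewrite -subr_ge0.
set x := f (z - 1); set y := f z; set u := f (z + 1); set w := f (z + 2).
have -> : ((z + 1 + 1) * u + (n.+2%:Z - (z + 1)) * y) ^+ 2 -
    ((z + 1) * y + (n.+2%:Z - z) * x) * ((z + 2 + 1) * w + (n.+2%:Z - (z + 2)) * u) =
    (n.+2%:Z - z) * (n%:Z - z) * (y ^+ 2 - x * u) + (z + 1) * (z + 3) * (u ^+ 2 - y * w)
    + (n.+2%:Z - z) * (z + 3) * (y * u - x * w) + (y - u) ^+ 2.
  by rewrite (_ : n.+2%:Z = n%:Z + 2); [ring | lia].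
have lc2 : y * w <= u ^+ 2 by rewrite /y /w /u lc.
have ge0_n2z : 0 <= n.+2%:Z - z by lia.
have ge0_nz : 0 <= n%:Z - z by lia.
have ge0_z1 : 0 <= z + 1 by [].
have ge0_z3 : 0 <= z + 3 by lia.
by rewrite !addr_ge0 ?sqr_ge0 // !mulr_ge0 // subr_ge0.
Qed.

Lemma lc_on_eulerian_step : lc_on F n.+1.
Proof.
split=> [|z|]; [exact: eulerian_step_ge0 | | exact: eulerian_step_log_concave].
have [/andP[z_ge0 z_le]|z_out] := boolP (0 <= z <= n.+1%:Z); last first.
  by rewrite eulerian_step_eq0 ?ltxx ?(negbTE z_out) //; move: z_out; lia.
apply/idP; have [ge0 _ _] := lcf.
have [z_le_n|z_gt_n] := leP z n%:Z.
  rewrite /F /eulerian_step ltr_wpDr ?mulr_ge0 //; first lia.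
  by apply: mulr_gt0; [lia | apply: (lc_on_gt0 lcf); lia].
rewrite /F /eulerian_step ltr_wpDl ?mulr_ge0 //; first lia.
by apply: mulr_gt0; [lia | apply: (lc_on_gt0 lcf); lia].
Qed.

Lemma sym_on_eulerian_step : sym_on f n -> sym_on F n.+1.
Proof.
move=> sf z; rewrite /F /eulerian_step.
have -> : f (n.+1%:Z - z) = f (z - 1) by rewrite sf; congr f; lia.
have -> : f (n.+1%:Z - z - 1) = f z by rewrite sf; congr f; lia.
have -> : n.+2%:Z = n%:Z + 2 by lia.
have -> : n.+1%:Z = n%:Z + 1 by lia.
ring.
Qed.

End EulerianStep.

Definition exc n (s : 'S_n) : nat := #|[pred i : 'I_n | (i < s i)%N]|.

Definition eulerian n : {poly int} := \sum_(s : 'S_n) 'X^(exc s).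

Lemma exc_sum n (s : 'S_n) : exc s = (\sum_(i < n) (i < s i)%N)%N.
Proof.
rewrite /exc -sum1_card big_mkcond /=; apply: eq_bigr => i _.
by rewrite inE; case: ifP.
Qed.

Lemma exc_le n (s : 'S_n) : (exc s <= n)%N.
Proof. by rewrite /exc (leq_trans (max_card _)) // card_ord. Qed.

(* [insert_max (j, s)] maps [j] to the new largest value [n] and moves the
   old value [s j] to the new last position [n]. *)
Definition insert_max n (p : 'I_n.+1 * 'S_n) : 'S_n.+1 :=
  (tperm p.1 ord_max * lift_perm ord_max ord_max p.2)%g.

Lemma insert_max_pos n (p : 'I_n.+1 * 'S_n) : insert_max p p.1 = ord_max.
Proof. by rewrite /insert_max permM tpermL lift_perm_id. Qed.

Lemma insert_max_inj n : injective (@insert_max n).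
Proof.
move=> [j s] [j' s'] E.
have ej : j = j'.
  apply: (perm_inj (s := insert_max (j', s'))); rewrite -{1}E.
  exact: (etrans (insert_max_pos (j, s)) (esym (insert_max_pos (j', s')))).
subst j'; congr (_, _).
move: E; rewrite /insert_max /= => /mulgI E.
apply/permP => k; apply: (@lift_inj _ ord_max).
by rewrite -!(lift_perm_lift ord_max ord_max) E.
Qed.

Lemma insert_max_bij n : bijective (@insert_max n).
Proof.
apply: inj_card_bij; first exact: insert_max_inj.
by rewrite card_prod card_ord !card_Sn factS.
Qed.

Lemma widen_ord_lift_max n (x : 'I_n) : widen_ord (leqnSn n) x = lift ord_max x.
Proof. by apply: val_inj; rewrite /= /bump leqNgt ltn_ord. Qed.

Lemma exc_lift_max n (p : 'S_n.+1) :
  exc p = (\sum_(x < n) (x < p (lift ord_max x)))%N.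
Proof.
rewrite exc_sum big_ord_recr /= ltnNge -ltnS ltn_ord addn0.
by apply: eq_bigr => x _; rewrite widen_ord_lift_max.
Qed.

Lemma exc_insert_max_last n (s : 'S_n) : exc (insert_max (ord_max, s)) = exc s.
Proof.
rewrite exc_lift_max exc_sum; apply: eq_bigr => x _.
by rewrite /insert_max /= tperm1 mul1g lift_perm_lift lift_max.
Qed.

(* Position [j < n] becomes an excedance, the new last position is not one,
   and the excedance formerly at [j], if any, is lost. *)
Lemma exc_insert_max n (j : 'I_n) (s : 'S_n) :
  (exc (insert_max (widen_ord (leqnSn n) j, s)) + (j < s j))%N = (exc s).+1.
Proof.
rewrite exc_lift_max exc_sum (bigD1 j) //= [in RHS](bigD1 j) //=.
have -> : (\sum_(i < n | i != j)
             (i < insert_max (widen_ord (leqnSn n) j, s) (lift ord_max i)))%N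
        = (\sum_(i < n | i != j) (i < s i))%N.
  apply: eq_bigr => x xj.
  rewrite /insert_max permM /= tpermD; last exact: neq_lift.
    by rewrite lift_perm_lift lift_max.
  by rewrite widen_ord_lift_max (inj_eq (@lift_inj _ _)) eq_sym.
rewrite /insert_max permM /= widen_ord_lift_max tpermL lift_perm_id /= ltn_ord.
move: (\sum_(i < n | i != j) (i < s i))%N => a.
by case: (j < s j)%N => /=; lia.
Qed.

Lemma sum_negb n (b : 'I_n -> bool) :
  (\sum_(j < n) ~~ b j)%N = (n - \sum_(j < n) b j)%N.
Proof.
have : (\sum_(j < n) (b j + ~~ b j))%N = n.
  by rewrite (eq_bigr (fun _ => 1%N)) ?sum1_card ?card_ord // => j _; case: (b j).
by rewrite big_split /=; lia.
Qed.

Lemma eulerianS n : eulerian n.+1 =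
  \sum_(s : 'S_n) ('X^(exc s) *+ (exc s).+1 + 'X^((exc s).+1) *+ (n - exc s)).
Proof.
rewrite /eulerian (reindex (@insert_max n)) /=; last exact: onW_bij (insert_max_bij n).
have -> : \sum_(p : 'I_n.+1 * 'S_n) ('X^(exc (insert_max p)) : {poly int}) =
    \sum_(j : 'I_n.+1) \sum_(s : 'S_n) 'X^(exc (insert_max (j, s))).
  by rewrite pair_bigA; apply: eq_bigr => -[].
rewrite exchange_big /=; apply: eq_bigr => s _.
rewrite big_ord_recr /= exc_insert_max_last.
have -> : \sum_(j < n) ('X^(exc (insert_max (widen_ord (leqnSn n) j, s))) : {poly int}) =
    \sum_(j < n) ('X^(exc s) *+ (j < s j)%N + 'X^((exc s).+1) *+ ~~ (j < s j)%N).
  apply: eq_bigr => j _; have := exc_insert_max j s.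
  case: (j < s j)%N => /= [|E]; last by rewrite addn0 in E; rewrite E add0r.
  by rewrite addn1 => -[->]; rewrite addr0.
by rewrite big_split /= !sumrMnr sum_negb -exc_sum mulrSr addrAC.
Qed.

Definition coefz (p : {poly int}) (z : int) : int := if z is Posz k then p`_k else 0.

Lemma coefz_neg (p : {poly int}) z : z < 0 -> coefz p z = 0.
Proof. by case: z. Qed.

Lemma eq_lc_on f g s : f =1 g -> lc_on f s -> lc_on g s.
Proof. by move=> fg [ge0 gt0 lc]; split=> z; rewrite -!fg. Qed.

Lemma eq_sym_on f g s : f =1 g -> sym_on f s -> sym_on g s.
Proof. by move=> fg sf z; rewrite -!fg. Qed.

Lemma size_lc_on (p : {poly int}) s : lc_on (coefz p) s -> size p = s.+1.
Proof.
move=> lcp; apply/eqP; rewrite eqn_leq; apply/andP; split.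
  by apply/leq_sizeP => j js; rewrite -[p`_j]/(coefz p j) (lc_on_eq0 lcp) //; lia.
rewrite ltnNge; apply/negP => /leq_sizeP/(_ s (leqnn s)).
by apply/eqP; rewrite -[p`_s]/(coefz p s) gt_eqF // (lc_on_gt0 lcp); lia.
Qed.

Lemma coefzM (p q : {poly int}) N z :
  (size p <= N)%N -> coefz (p * q) z = conv (coefz p) (coefz q) N z.
Proof.
move=> sp; rewrite /conv.
case: z => [m|m] /=; last first.
  by rewrite big1 // => j _; rewrite coefz_neg ?mulr0 // NegzE; lia.
rewrite coefM.
have -> : \sum_(j < N) coefz p j * coefz q (m%:Z - j%:Z) =
          \sum_(j < m.+1 + N) coefz p j * coefz q (m%:Z - j%:Z).
  rewrite (big_ord_widen _ (fun j : nat => coefz p j * coefz q (m%:Z - j%:Z))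
                         (leq_addl m.+1 N)).
  rewrite big_mkcond /=; apply: eq_bigr => j _.
  by case: ifP => // /negbT; rewrite -leqNgt => jN; rewrite (leq_sizeP _ _ sp) ?mul0r.
rewrite (big_ord_widen _ (fun j : nat => p`_j * q`_(m - j)) (leq_addr N m.+1)).
rewrite big_mkcond /=; apply: eq_bigr => j _.
case: ifP => jm; last by rewrite coefz_neg ?mulr0 //; lia.
by rewrite (_ : m%:Z - j%:Z = (m - j)%N%:Z) //; lia.
Qed.

Lemma lc_on_coefzM (p q : {poly int}) s t :
  lc_on (coefz p) s -> lc_on (coefz q) t -> lc_on (coefz (p * q)) (s + t).
Proof.
move=> lcp lcq; apply: eq_lc_on (lc_on_conv lcp lcq) => z.
by rewrite (coefzM _ _ (N := s.+2)) // (size_lc_on lcp).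
Qed.

Lemma sym_on_coefzM (p q : {poly int}) s t :
  lc_on (coefz p) s -> sym_on (coefz p) s -> sym_on (coefz q) t ->
  sym_on (coefz (p * q)) (s + t).
Proof.
move=> lcp sp sq; apply: eq_sym_on (sym_on_conv sp sq) => z.
by rewrite (coefzM _ _ (N := s.+1)) // (size_lc_on lcp).
Qed.

Lemma coefz1 z : coefz 1 z = (z == 0)%:R.
Proof. by case: z => [[|k]|k] //=; rewrite coef1. Qed.

Lemma lc_sym_coefz1 : lc_on (coefz 1) 0 /\ sym_on (coefz 1) 0.
Proof.
split; last by move=> z; rewrite !coefz1 subr_eq0 eq_sym.
split=> z; rewrite !coefz1; first by case: (z == 0).
  by case: eqP => /= z0; lia.
by case: eqP => z0; case: eqP => z2; case: eqP => z1 //=; lia.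
Qed.

Lemma coef_eulerian n (k : nat) :
  (eulerian n)`_k = \sum_(s : 'S_n) ((k == exc s)%:R : int).
Proof. by rewrite /eulerian coef_sum; apply: eq_bigr => s _; rewrite coefXn. Qed.

Lemma coefz_eulerian_pred n (k : nat) :
  coefz (eulerian n) (k%:Z - 1) = \sum_(s : 'S_n) ((k == (exc s).+1)%:R : int).
Proof.
case: k => [|k]; first by rewrite coefz_neg // big1.
by rewrite (_ : k.+1%:Z - 1 = k%:Z); [exact: coef_eulerian | lia].
Qed.

Lemma coefz_eulerianS n z : coefz (eulerian n.+1) z =
  (z + 1) * coefz (eulerian n) z + (n.+1%:Z - z) * coefz (eulerian n) (z - 1).
Proof.
case: z => [k|k]; last by rewrite !coefz_neg ?mulr0 ?addr0 // NegzE; lia.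
rewrite coefz_eulerian_pred /= eulerianS coef_sum coef_eulerian.
rewrite !mulr_sumr -big_split /=; apply: eq_bigr => s _.
rewrite coefD !coefMn !coefXn; have := exc_le s.
have [->|k_ne] := eqVneq k (exc s).
  by rewrite (_ : (exc s == (exc s).+1) = false) ?mulr0n ?mulr0 ?addr0 ?mulr1 ?mulr1n; lia.
have [->|_] /= := eqVneq k (exc s).+1 => [le_n|_].
  by rewrite mul0rn add0r mulr0 add0r mulr1; lia.
by rewrite !mul0rn !mulr0 !addr0.
Qed.

Lemma eulerian0 : eulerian 0 = 1.
Proof.
rewrite /eulerian (eq_bigr (fun _ => 1)) ?sumr_const ?card_Sn //.
by move=> s _; have := exc_le s; rewrite leqn0 => /eqP->.
Qed.

Lemma lc_sym_coefz_eulerian n :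
  lc_on (coefz (eulerian n.+1)) n /\ sym_on (coefz (eulerian n.+1)) n.
Proof.
elim: n => [|n [lcE symE]].
  have E1 : coefz 1 =1 coefz (eulerian 1).
    move=> z; rewrite coefz_eulerianS eulerian0 !coefz1.
    by have [->|z0] := eqVneq z 0; case: eqP => //= z1; lia.
  by have [lc1 sym1] := lc_sym_coefz1; split; [exact: eq_lc_on lc1 | exact: eq_sym_on sym1].
have E : eulerian_step (coefz (eulerian n.+1)) n =1 coefz (eulerian n.+2).
  by move=> z; rewrite coefz_eulerianS.
split; first exact: eq_lc_on E (lc_on_eulerian_step lcE).
exact: eq_sym_on E (sym_on_eulerian_step symE).
Qed.

Definition qint (l : nat) : {poly int} := \poly_(i < l) 1.

Lemma qint_sum l : qint l = \sum_(i < l) 'X^i.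
Proof. by rewrite /qint poly_def; apply: eq_bigr => i _; rewrite scale1r. Qed.

Lemma coefz_qint l z : coefz (qint l) z = if (0 <= z) && (z < l%:Z) then 1 else 0.
Proof. by case: z => [k|k] //=; rewrite coef_poly. Qed.

Lemma lc_sym_coefz_qint l : lc_on (coefz (qint l.+1)) l /\ sym_on (coefz (qint l.+1)) l.
Proof.
split; last by move=> z; rewrite !coefz_qint; do 2 case: ifP => ? //; lia.
split=> z; rewrite ?coefz_qint; first by case: ifP.
  by case: ifP => ?; lia.
by do 3 case: ifP => ? //=; lia.
Qed.

Lemma lc_sym_coefz_qintX l m :
  lc_on (coefz (qint l.+1 ^+ m)) (m * l) /\ sym_on (coefz (qint l.+1 ^+ m)) (m * l).
Proof.
elim: m => [|m [lcQ symQ]]; first by rewrite expr0 mul0n; exact: lc_sym_coefz1.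
have [lc1 sym1] := lc_sym_coefz_qint l.
rewrite exprSr mulSnr; split; [exact: lc_on_coefzM | exact: sym_on_coefzM].
Qed.

Lemma prodXn (I : finType) (w : I -> nat) :
  \prod_(i : I) ('X^(w i) : {poly int}) = 'X^(\sum_(i : I) w i).
Proof. by rewrite (big_morph _ (exprD 'X) (expr0 'X)). Qed.

Lemma sum_color_weight l (b : bool) : (0 < l)%N ->
  \sum_(c < l) ('X^(l * ((c == 0 :> nat) && b) + c) : {poly int}) = qint l * 'X^b.
Proof.
case: l => // l _; rewrite qint_sum.
case: b => /=; last by rewrite mulr1; apply: eq_bigr => i _; rewrite andbF muln0.
rewrite big_ord_recl /= muln1 addn0 mulr_suml big_ord_recr /= -exprSr addrC.
by congr (_ + _); apply: eq_bigr => i _; rewrite /bump /= muln0 add0n add1n -exprSr.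
Qed.

Lemma cexc_sum l n (s : 'S_n) (e : {ffun 'I_n -> 'I_l}) :
  cexc (s, e) = (\sum_(i < n) ((e i == 0 :> nat) && (i < s i)%N))%N.
Proof.
rewrite /cexc -sum1_card big_mkcond /=; apply: eq_bigr => i _.
by rewrite inE; case: ifP.
Qed.

Lemma colEulerian_qint l n : (0 < l)%N -> colEulerian l n = qint l ^+ n * eulerian n.
Proof.
move=> l_gt0.
have -> : colEulerian l n =
    \sum_(s : 'S_n) \sum_(e : {ffun 'I_n -> 'I_l}) 'X^(fexc (s, e)).
  by rewrite /colEulerian pair_bigA; apply: eq_bigr => -[].
rewrite /eulerian mulr_sumr; apply: eq_bigr => s _.
pose w (i : 'I_n) (c : 'I_l) : {poly int} := 'X^(l * ((c == 0 :> nat) && (i < s i)%N) + c).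
have -> : \sum_(e : {ffun 'I_n -> 'I_l}) ('X^(fexc (s, e)) : {poly int}) =
    \sum_(e : {ffun 'I_n -> 'I_l}) \prod_(i < n) w i (e i).
  by apply: eq_bigr => e _; rewrite prodXn /fexc cexc_sum big_split /= big_distrr.
rewrite -bigA_distr_bigA (eq_bigr (fun i : 'I_n => qint l * 'X^(i < s i)%N)).
  by rewrite big_split /= prodr_const card_ord prodXn -exc_sum.
by move=> i _; rewrite sum_color_weight.
Qed.

Section CoefficientShape.
Variables (p : {poly int}) (S : nat).
Hypotheses (lcp : lc_on (coefz p) S) (symp : sym_on (coefz p) S).

Lemma coef_lc_on_gt0 k : (k <= S)%N -> 0 < p`_k.
Proof. by move=> kS; apply: (lc_on_gt0 lcp (z := k)); lia. Qed.

Lemma coef_lc_on_log_concave k : p`_k * p`_k.+2 <= p`_k.+1 ^+ 2.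
Proof.
have [_ _ lc] := lcp; have := lc k.
have -> : k%:Z + 2 = k.+2%:Z by lia.
by have -> : k%:Z + 1 = k.+1%:Z by lia.
Qed.

Lemma coef_sym_on k : (k <= S)%N -> p`_k = p`_(S - k).
Proof.
move=> kS; rewrite -[p`_k]/(coefz p k) symp.
by have -> : S%:Z - k%:Z = (S - k)%N%:Z by lia.
Qed.

Lemma coef_lc_on_descent j :
  (j.+2 <= S)%N -> p`_j.+1 < p`_j -> p`_j.+2 < p`_j.+1.
Proof.
move=> jS desc; rewrite ltNge; apply/negP => asc.
have gt0_j := coef_lc_on_gt0 (ltnW (ltnW jS)).
have gt0_j1 := coef_lc_on_gt0 (ltnW jS).
have := coef_lc_on_log_concave j; rewrite expr2 leNgt => /negP; apply.
by rewrite (lt_le_trans (y := p`_j * p`_j.+1)) ?ltr_pM2r ?ler_pM2l.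
Qed.

Lemma coef_lc_on_le_succ k : (k.*2.+2 <= S)%N -> p`_k <= p`_k.+1.
Proof.
move=> kS; rewrite leNgt; apply/negP => desc.
have step m : (k + m.+1 <= S)%N -> p`_(k + m.+1) < p`_(k + m).
  elim: m => [|m IH] mS; first by rewrite addn1 addn0.
  by rewrite !addnS coef_lc_on_descent -?addnS ?IH //; lia.
have below m : (k + m.+1 <= S)%N -> p`_(k + m.+1) < p`_k.
  elim: m => [|m IH] mS; first by have := step 0%N mS; rewrite addn0.
  exact: lt_trans (step m.+1 mS) (IH ltac:(lia)).
have mid : (k + (S - k - k).-1.+1)%N = (S - k)%N by lia.
have := below (S - k - k).-1 ltac:(lia).
by rewrite mid -coef_sym_on ?ltxx //; lia.
Qed.

Lemma lowdeg_lc_on : lowdeg p = 0%N.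
Proof.
have := coef_lc_on_gt0 (leq0n S); rewrite /lowdeg lt0r => /andP[p0 _].
by move: p0; case: (polyseq p) => //= c r ->.
Qed.

Lemma lc_on_shape : t_symmetric p /\ log_concave p /\ t_unimodal p.
Proof.
have p_neq0 : p != 0 by rewrite -size_poly_gt0 (size_lc_on lcp).
rewrite /t_symmetric /log_concave /t_unimodal lowdeg_lc_on (size_lc_on lcp) /=.
split; first by split=> // k; rewrite subn0 add0n; apply: coef_sym_on.
split; first split=> // k k_gt0 kS.
  by have := coef_lc_on_log_concave k.-1; rewrite prednK.
split=> //; split=> [k _ k_lt|k k_ge kS].
  by apply: coef_lc_on_le_succ; move: k_lt; rewrite add0n geq_half_double -!addnn; lia.
have sym_k1 : (S - k.+1).+1 = (S - k)%N by lia.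
rewrite coef_sym_on // (coef_sym_on (k := k)) ?(ltnW kS) // -sym_k1.
by apply: coef_lc_on_le_succ; move: k_ge; rewrite add0n uphalfE leq_half_double -!addnn; lia.
Qed.

End CoefficientShape.

Theorem proposition4p8 (l n : nat) :
  (1 <= l)%N -> (1 <= n)%N ->
  t_symmetric (colEulerian l n) /\ log_concave (colEulerian l n) /\
  t_unimodal (colEulerian l n).
Proof.
case: l => // l; case: n => // n _ _.
have [lcQ symQ] := lc_sym_coefz_qintX l n.+1.
have [lcE symE] := lc_sym_coefz_eulerian n.
rewrite colEulerian_qint //; apply: (@lc_on_shape _ (n.+1 * l + n)).
  exact: lc_on_coefzM.
exact: sym_on_coefzM.
Qed.
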